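(* Let $x$ be a shallow feasible solution to the integer quadratic program (minimize $x^TQx$ subject to $Ax\le b$, $Cx=d$, $x\in\mathbb{Z}^n$). Then there exist a row $a_j^T$ of $A$ and an integer $b_j'$ such that $a_j^Tx=b_j'$ and $b_j'\in\{b_j-\alpha\cdot n\cdot\Delta^2,\ldots,b_j\}$. Further, $a_j^T$ is linearly independent from the rows of $C$.
   Context: Setting: $Q$ is an $n\times n$ integer symmetric matrix, $A$ an $m\times n$ integer matrix with rows $a_1^T,\dots,a_m^T$, $b\in\mathbb{Z}^m$ with entries $b_j$, $C$ an integer matrix with $n$ columns and linearly independent rows, and $d$ an integer vector. $\alpha$ is the maximum absolute value of an entry of $Q$ and $A$, and $\Delta$ is the maximum absolute value of the determinant of a square submatrix of $C$. $y_1,\dots,y_r$ is a basis of the nullspace of $C$ consisting of integer vectors with $|y_i|_\infty\le\Delta^2$ for all $i$, and $Y$ is the set of these vectors. A feasible solution is an $x\in\mathbb{Z}^n$ with $Ax\le b$ and $Cx=d$. A feasible solution $x$ is deep if $x+y_i$ and $x-y_i$ are feasible solutions for all $y_i\in Y$, and shallow otherwise. *)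

From HB Require Import structures.
From mathcomp Require Import all_boot all_order all_algebra.
Set Implicit Arguments. Unset Strict Implicit. Unset Printing Implicit Defensive.
Import Order.TTheory GRing.Theory Num.Theory.
Local Open Scope ring_scope.

(* integer matrices viewed over the rationals, for linear-algebra notions *)
Definition ratmx (p q : nat) (M : 'M[int]_(p, q)) : 'M[rat]_(p, q) :=
  map_mx (fun z : int => z%:~R) M.

Definition alpha (n m : nat) (Q : 'M[int]_n) (A : 'M[int]_(m, n)) : nat :=
  maxn (\max_(i : 'I_n) \max_(j : 'I_n) `|Q i j|%N)
       (\max_(i : 'I_m) \max_(j : 'I_n) `|A i j|%N).

(* A p x p submatrix is given by injective row selection f and column
   selection g (p ranges over 0..k; the 0x0 submatrix has determinant 1). *)
Definition Delta (k n : nat) (C : 'M[int]_(k, n)) : nat :=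
  \max_(p < k.+1)
    \max_(f : {ffun 'I_p -> 'I_k} | injectiveb f)
      \max_(g : {ffun 'I_p -> 'I_n} | injectiveb g)
        `|\det (\matrix_(i < p, j < p) C (f i) (g j))|%N.

Definition feasible (m n k : nat) (A : 'M[int]_(m, n)) (b : 'cV[int]_m)
    (C : 'M[int]_(k, n)) (d : 'cV[int]_k) (x : 'cV[int]_n) : Prop :=
  (forall j : 'I_m, (A *m x) j 0 <= b j 0) /\ C *m x = d.

(* Y : the columns col i Y are the vectors y_1, ..., y_r *)
Definition deep (m n k r : nat) (A : 'M[int]_(m, n)) (b : 'cV[int]_m)
    (C : 'M[int]_(k, n)) (d : 'cV[int]_k) (Y : 'M[int]_(n, r))
    (x : 'cV[int]_n) : Prop :=
  feasible A b C d x /\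
  forall i : 'I_r, feasible A b C d (x + col i Y) /\ feasible A b C d (x - col i Y).

Definition shallow (m n k r : nat) (A : 'M[int]_(m, n)) (b : 'cV[int]_m)
    (C : 'M[int]_(k, n)) (d : 'cV[int]_k) (Y : 'M[int]_(n, r))
    (x : 'cV[int]_n) : Prop :=
  feasible A b C d x /\ ~ deep A b C d Y x.

From HB Require Import structures.
From mathcomp Require Import all_boot all_order all_algebra.
Import Order.TTheory GRing.Theory Num.Theory.
Local Open Scope ring_scope.

(* Since C y = 0 for y in Y, x +- y can only fail to be feasible through
   some inequality: b_j < a_j x + |a_j y|.  As |a_j y| <= alpha n Delta^2,
   that constraint is nearly tight at x; and a_j y <> 0 while C y = 0, so
   a_j is not in the row space of C. *)

Section RowFree.

Variable F : fieldType.

Lemma submx_mulmx_eq0 {p k n q : nat} (v : 'M[F]_(p, n)) (M : 'M[F]_(k, n))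
    (y : 'M[F]_(n, q)) :
  (v <= M)%MS -> M *m y = 0 -> v *m y = 0.
Proof. by case/submxP=> D -> My0; rewrite -mulmxA My0 mulmx0. Qed.

Lemma row_free_col_mx_row {k n : nat} (M : 'M[F]_(k, n)) (v : 'rV[F]_n) :
  row_free M -> ~~ (v <= M)%MS -> row_free (col_mx M v).
Proof.
move=> /eqP freeM vNM; apply/eqP/anti_leq; rewrite rank_leq_row /=.
rewrite -addsmxE -[in X in (X + 1)%N]freeM addn1; apply: rank_ltmx.
by rewrite ltmxE addsmxSl addsmx_sub negb_and vNM orbT.
Qed.

End RowFree.

Lemma ratmxM {p q s : nat} (M : 'M[int]_(p, q)) (N : 'M[int]_(q, s)) :
  ratmx (M *m N) = ratmx M *m ratmx N.
Proof. exact: map_mxM. Qed.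

Lemma row_free_col_mx_ratmx_row {m n k : nat} {A : 'M[int]_(m, n)}
    {C : 'M[int]_(k, n)} {y : 'cV[int]_n} {j : 'I_m} :
  row_free (ratmx C) -> C *m y = 0 -> (A *m y) j 0 != 0 ->
  row_free (col_mx (ratmx C) (row j (ratmx A))).
Proof.
move=> freeC Cy0 Ajy0; apply: row_free_col_mx_row => //; apply/negP => AjC.
have /matrixP/(_ 0 0) : row j (ratmx A) *m ratmx y = 0.
  by apply: submx_mulmx_eq0 AjC _; rewrite -ratmxM Cy0 /ratmx map_mx0.
rewrite -row_mul -ratmxM !mxE => /eqP; rewrite intr_eq0.
by move: Ajy0; rewrite mxE => /negbTE ->.
Qed.

Lemma norm_mulmx_le {R : numDomainType} {p n q : nat} {M : 'M[R]_(p, n)}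
    {N : 'M[R]_(n, q)} {a c : R} (i : 'I_p) (j : 'I_q) :
  (forall i l, `|M i l| <= a) -> (forall l j, `|N l j| <= c) ->
  `|(M *m N) i j| <= (a * c) *+ n.
Proof.
move=> Ma Nc; rewrite mxE; apply: le_trans (ler_norm_sum _ _ _) _.
rewrite -[n in _ *+ n]card_ord -sumr_const; apply: ler_sum => l _.
by rewrite normrM ler_pM.
Qed.

Lemma norm_le_alpha {n m : nat} (Q : 'M[int]_n) (A : 'M[int]_(m, n))
    (i : 'I_m) (l : 'I_n) :
  `|A i l| <= (alpha Q A)%:Z.
Proof.
rewrite -abszE lez_nat; apply: leq_trans (leq_maxr _ _).
by apply: leq_trans (leq_bigmax i); apply: (leq_bigmax l).
Qed.

Lemma feasible_shift {m n k : nat} {A : 'M[int]_(m, n)} {b : 'cV[int]_m}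
    {C : 'M[int]_(k, n)} {d : 'cV[int]_k} {x y : 'cV[int]_n} :
  feasible A b C d x -> C *m y = 0 ->
  (forall j, (A *m x) j 0 + `|(A *m y) j 0| <= b j 0) ->
  feasible A b C d (x + y) /\ feasible A b C d (x - y).
Proof.
move=> [_ Cxd] Cy0 slack.
split; split=> [j|]; rewrite mulmxDr ?mulmxN ?Cy0 ?oppr0 ?Cxd ?addr0 ?subr0 //.
all: rewrite [X in X <= _]mxE; apply: le_trans (slack j); rewrite lerD2l.
- exact: ler_norm.
- by rewrite mxE -normrN ler_norm.
Qed.

Lemma shallow_near_violation {m n k r : nat} {A : 'M[int]_(m, n)}
    {b : 'cV[int]_m} {C : 'M[int]_(k, n)} {d : 'cV[int]_k}
    {Y : 'M[int]_(n, r)} {x : 'cV[int]_n} :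
  C *m Y = 0 -> shallow A b C d Y x ->
  exists (i : 'I_r) (j : 'I_m),
    b j 0 < (A *m x) j 0 + `|(A *m col i Y) j 0|.
Proof.
move=> CY0 [feas_x not_deep].
have [/existsP[i /existsP[j viol]] | none] :=
  boolP [exists i, exists j, b j 0 < (A *m x) j 0 + `|(A *m col i Y) j 0|].
- by exists i, j.
- exfalso; apply: not_deep; split=> // i; apply: feasible_shift => //.
    by rewrite colE mulmxA CY0 mul0mx.
  move=> j; rewrite leNgt; apply/negP => viol; move/negP: none; apply.
  by apply/existsP; exists i; apply/existsP; exists j.
Qed.

Theorem lemma2 (n m k r : nat) (Q : 'M[int]_n) (A : 'M[int]_(m, n))
    (b : 'cV[int]_m) (C : 'M[int]_(k, n)) (d : 'cV[int]_k)
    (Y : 'M[int]_(n, r))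
    (hQ : Q^T = Q)
    (hC : row_free (ratmx C))
    (hY_ker : C *m Y = 0)
    (hY_free : row_free (ratmx Y)^T)
    (hY_span : (kermx (ratmx C)^T <= (ratmx Y)^T)%MS)
    (hY_bound : forall (i : 'I_n) (l : 'I_r), `|Y i l| <= ((Delta C) ^ 2)%:Z)
    (x : 'cV[int]_n)
    (hx : shallow A b C d Y x) :
  exists (j : 'I_m) (b' : int),
    (A *m x) j 0 = b' /\
    b j 0 - ((alpha Q A * n * (Delta C) ^ 2)%N)%:Z <= b' <= b j 0 /\
    row_free (col_mx (ratmx C) (row j (ratmx A))).
Proof.
have [i [j viol]] := shallow_near_violation hY_ker hx.
have Axb : (A *m x) j 0 <= b j 0 by case: hx => -[].
have Ay_bound : `|(A *m col i Y) j 0| <= ((alpha Q A * n * Delta C ^ 2)%N)%:Z.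
  have -> : ((alpha Q A * n * Delta C ^ 2)%N)%:Z =
      ((alpha Q A)%:Z * (Delta C ^ 2)%:Z) *+ n.
    by rewrite -mulr_natr natz -!PoszM mulnAC.
  apply: norm_mulmx_le => [l l' | l l']; first exact: norm_le_alpha.
  by rewrite mxE hY_bound.
have Ay_neq0 : (A *m col i Y) j 0 != 0.
  by apply: contraTneq viol => ->; rewrite normr0 addr0 -leNgt.
exists j, ((A *m x) j 0); split=> //; split.
- rewrite Axb andbT lerBlDr; apply: ltW; apply: (lt_le_trans viol).
  by rewrite lerD2l.
- apply: row_free_col_mx_ratmx_row hC _ Ay_neq0.
  by rewrite colE mulmxA hY_ker mul0mx.
Qed.
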